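(* Let $k\geq 3$ and let $G$ be a diregular $(2,k,+3)$-digraph. Let $u,v$ be distinct vertices with exactly one common out-neighbour $u_2$, and write $N^+(u)=\{u_1,u_2\}$, $N^+(v)=\{v_1,u_2\}$. Let $w\in T(v_1)$ with $d(v_1,w)=l$, and suppose also $w\in T(u_1)$ with $d(u_1,w)=m$. Then either $m\leq l$ or $w\in N^{k-1}(u_1)$. Symmetrically, if $w\in T(u_1)\cap T(v_1)$ with $d(u_1,w)=l$ and $d(v_1,w)=m$, then either $m\leq l$ or $w\in N^{k-1}(v_1)$.
   Context: A digraph is $k$-geodetic if for every ordered pair of vertices $x,y$ there is at most one directed path from $x$ to $y$ of length at most $k$ (the trivial path counts). A diregular $(2,k,+3)$-digraph is a $k$-geodetic digraph of order $1+2+\dots+2^k+3$ in which every vertex has in- and out-degree $2$. $N^+(x)$ is the set of out-neighbours of $x$; $N^l(x)$ is the set of end-vertices of directed paths of length $l$ starting at $x$. $d(x,y)$ is the directed distance. $T(x)=\{y: d(x,y)\leq k-1\}$. *)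

From mathcomp Require Import all_boot.
Set Implicit Arguments. Unset Strict Implicit. Unset Printing Implicit Defensive.

(* A digraph is a finite vertex type V with arc relation e : rel V.
   A directed walk of length n from x is a sequence p of n vertices with
   path e x p; its end-vertex is last x p. *)

(* k-geodetic: for every ordered pair x,y (not necessarily distinct) there is
   at most one directed walk from x to y of length at most k (trivial walk counts). *)
Definition k_geodetic (V : finType) (e : rel V) (k : nat) : Prop :=
  forall (x : V) (p q : seq V),
    path e x p -> path e x q -> size p <= k -> size q <= k ->
    last x p = last x q -> p = q.

Definition diregular2 (V : finType) (e : rel V) : Prop :=
  forall x : V, #|[set y | e x y]| = 2 /\ #|[set y | e y x]| = 2.

Definition diregular_2k3 (V : finType) (e : rel V) (k : nat) : Prop :=
  [/\ k_geodetic e k, diregular2 e & #|V| = (\sum_(i < k.+1) 2 ^ i) + 3].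

Definition inN (V : finType) (e : rel V) (x : V) (l : nat) (y : V) : Prop :=
  exists p : seq V, [/\ size p = l, path e x p & last x p = y].

Definition dist_is (V : finType) (e : rel V) (x y : V) (l : nat) : Prop :=
  inN e x l y /\ forall m, m < l -> ~ inN e x m y.

Definition inT (V : finType) (e : rel V) (k : nat) (x y : V) : Prop :=
  exists l, l <= k.-1 /\ dist_is e x y l.

From mathcomp Require Import all_boot zify.
Set Implicit Arguments. Unset Strict Implicit. Unset Printing Implicit Defensive.

(* Suppose d(v1,w) = l < m = d(u1,w) <= k-2 and put j = k - m >= 2.  A vertex
   z at distance j from w cannot be reached within k-1 steps from u1 (u1
   reaches it in exactly k steps) nor from u2 (v reaches it through v1 in at
   most k steps).  By the Moore count only u and the 3 vertices outside the
   k-ball of u are left for these 2^j >= 4 vertices, so they are exactly those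
   four, and every other vertex is within k-1 of u1 or of u2.  Neither v1 nor v
   is at distance j from w (that would close a short cycle) and neither is
   within k-1 of u2 (k-geodecity at v), so both are within k-1 of u1.  Following
   a walk from u1 to v by the arc to u2 or to v1 then contradicts k-geodecity
   at u or at u1. *)

Lemma card_bigcup_disjoint (I T : finType) (P : pred I) (F : I -> {set T}) :
  {in P &, forall i j, i != j -> [disjoint F i & F j]} ->
  #|\bigcup_(i | P i) F i| = \sum_(i | P i) #|F i|.
Proof.
move=> disjF; pose G i : {set T} := if P i then F i else set0.
have disjG i j : i != j -> [disjoint G i & G j].
  rewrite /G; case: ifP => Pi; case: ifP => Pj ij; first exact: disjF;
    by rewrite disjoints_subset ?sub0set // setC0 subsetT.
have -> : \bigcup_(i | P i) F i = \bigcup_i G i by rewrite big_mkcond.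
rewrite -sum1_card (partition_disjoint_bigcup _ _ disjG) [RHS]big_mkcond.
by apply: eq_bigr => i _; rewrite sum1_card /G; case: (P i); rewrite ?cards0.
Qed.

Section Walks.
Variables (V : finType) (e : rel V).

Lemma inN0 x : inN e x 0 x.
Proof. by exists [::]. Qed.

Lemma inN0_eq x y : inN e x 0 y -> x = y.
Proof. by case=> [[|? ?] [//= _ _ ->]]. Qed.

Lemma inN_cons x y n z : e x y -> inN e y n z -> inN e x n.+1 z.
Proof. by move=> exy [p [<- py <-]]; exists (y :: p); rewrite /= exy py. Qed.

Lemma inN_consP x n z : inN e x n.+1 z -> exists2 y, e x y & inN e y n z.
Proof.
by case=> [[|y p] [//= [<-] /andP [exy py] <-]]; exists y => //; exists p.
Qed.

Lemma inN_cat x y z m n : inN e x m y -> inN e y n z -> inN e x (m + n) z.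
Proof.
move=> [p [<- px <-]] [q [<- qy <-]].
by exists (p ++ q); rewrite size_cat cat_path px qy last_cat.
Qed.

Lemma dist_is_uniq x y m n : dist_is e x y m -> dist_is e x y n -> m = n.
Proof.
move=> [hm minm] [hn minn].
by case: (ltngtP m n) => [/minn/(_ hm)|/minm/(_ hn)|].
Qed.

Fixpoint ball (x : V) (d : nat) : {set V} :=
  if d is d'.+1 then x |: \bigcup_(y | e x y) ball y d' else [set x].

(* [sphere x 0] is empty, [d.-1] being truncated. *)
Definition sphere (x : V) (d : nat) : {set V} := ball x d :\: ball x d.-1.

Lemma ballP x d y : reflect (exists2 n, n <= d & inN e x n y) (y \in ball x d).
Proof.
elim: d x => [|d IHd] x /=.
  rewrite inE; apply: (iffP eqP) => [->|[[] // _ /inN0_eq -> //]].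
  by exists 0 => //; apply: inN0.
apply: (iffP setU1P) => [[->|/bigcupP [z exz /IHd [n hn hz]]]|[[|n] hn hy]].
- by exists 0 => //; apply: inN0.
- by exists n.+1 => //; apply: inN_cons hz.
- by left; rewrite (inN0_eq hy).
- have [z exz hz] := inN_consP hy.
  by right; apply/bigcupP; exists z => //; apply/IHd; exists n.
Qed.

Lemma subset_ball x d d' : d <= d' -> ball x d \subset ball x d'.
Proof.
move=> dd'; apply/subsetP => y /ballP [n hn hy].
by apply/ballP; exists n => //; apply: leq_trans dd'.
Qed.

Lemma sphere_inN x d y : y \in sphere x d -> inN e x d y.
Proof.
rewrite inE => /andP [/ballP nearer /ballP [n hn hy]].
case: (ltnP n d) => [nd|dn]; last by have <- : n = d by apply/anti_leq/andP.
by case: nearer; exists n => //; rewrite -ltnS (ltn_predK nd).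
Qed.

Section Geodetic.
Variable k : nat.
Hypothesis geo : k_geodetic e k.

Lemma geodetic_inN_uniq x y m n :
  inN e x m y -> inN e x n y -> m <= k -> n <= k -> m = n.
Proof.
move=> [p [<- px <-]] [q [<- qx pq]] pk qk.
by rewrite (geo px qx pk qk (esym pq)).
Qed.

Lemma geodetic_inN_head x a b y m n : e x a -> e x b ->
  inN e a m y -> inN e b n y -> m < k -> n < k -> a = b.
Proof.
move=> exa exb [p [<- pa <-]] [q [<- qb qy]] pk qk.
have := @geo x (a :: p) (b :: q); rewrite /= exa exb pa qb.
by case/(_ isT isT pk qk (esym qy)).
Qed.

Lemma geodetic_inN_loop x n : inN e x n x -> n <= k -> n = 0.
Proof. by move=> hx nk; apply: geodetic_inN_uniq hx (inN0 x) nk (leq0n k). Qed.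

Variable r : nat.
Hypothesis out_deg : forall x, #|[set y | e x y]| = r.

Lemma card_ball x d : d <= k -> #|ball x d| = \sum_(i < d.+1) r ^ i.
Proof.
elim: d x => [|d IHd] x dk /=; first by rewrite cards1 big_ord1.
have x_notin : x \notin \bigcup_(y | e x y) ball y d.
  apply/bigcupP => -[y exy /ballP [n nd hy]].
  by have := geodetic_inN_loop (inN_cons exy hy) (leq_ltn_trans nd dk).
have disj : {in e x &, forall y z, y != z -> [disjoint ball y d & ball z d]}.
  move=> y z exy exz; apply: contraNT => /pred0Pn [t /andP [/ballP [m md hy]]].
  move=> /ballP [n nd hz]; apply/eqP.
  exact: geodetic_inN_head exy exz hy hz (leq_ltn_trans md dk) (leq_ltn_trans nd dk).
rewrite cardsU1 x_notin card_bigcup_disjoint //.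
rewrite (eq_bigr (fun=> \sum_(i < d.+1) r ^ i)) => [|y _]; last exact: IHd (ltnW dk).
rewrite (eq_bigl (mem [set y | e x y])) => [|y]; last by rewrite /= inE.
rewrite sum_nat_const out_deg [RHS]big_ord_recl big_distrr expn0 /=.
by congr (1 + _); apply: eq_bigr => i _; rewrite expnS.
Qed.

Lemma card_sphere x d : 0 < d <= k -> #|sphere x d| = r ^ d.
Proof.
case: d => [//|d] /= dk.
rewrite /sphere cardsD (setIidPr (subset_ball x (leqnSn d))).
by rewrite !card_ball ?(ltnW dk) // big_ord_recr addKn.
Qed.

End Geodetic.
End Walks.

Section DiregularExcess3.
Variables (V : finType) (e : rel V) (k : nat).
Hypothesis geo : k_geodetic e k.
Hypothesis out_deg2 : forall x, #|[set y | e x y]| = 2.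
Hypothesis order : #|V| = \sum_(i < k.+1) 2 ^ i + 3.

Lemma card_outside_ball x : #|~: ball e x k| = 3.
Proof.
apply/eqP; rewrite -(eqn_add2l #|ball e x k|) cardsC.
by rewrite (card_ball geo out_deg2) // order.
Qed.

Lemma out_neighbours_neq x a b : (forall y, e x y <-> y = a \/ y = b) -> a != b.
Proof.
move=> hx; apply/eqP => ab; subst b.
have out_x : [set y | e x y] = [set a].
  by apply/setP => y; rewrite !inE; apply/idP/eqP => [/hx [] | ->] //; apply/hx; left.
by have := out_deg2 x; rewrite out_x cards1.
Qed.

Section Twins.
Variables u v u1 u2 v1 : V.
Hypothesis hu : forall x, e u x <-> x = u1 \/ x = u2.
Hypothesis hv : forall x, e v x <-> x = v1 \/ x = u2.

Let eu1 : e u u1. Proof. by apply/hu; left. Qed.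
Let eu2 : e u u2. Proof. by apply/hu; right. Qed.
Let ev1 : e v v1. Proof. by apply/hv; left. Qed.
Let ev2 : e v u2. Proof. by apply/hv; right. Qed.

Lemma mem_ball_out_neighbours y :
  y \notin u |: ~: ball e u k -> y \in ball e u1 k.-1 \/ y \in ball e u2 k.-1.
Proof.
rewrite !inE negb_or negbK => /andP [yu /ballP [[|n] nk hy]].
  by rewrite (inN0_eq hy) eqxx in yu.
have nk' : n <= k.-1 by lia.
by have [z /hu [] -> hz] := inN_consP hy; [left | right]; apply/ballP; exists n.
Qed.

Lemma sphere_eq_outside_ball w l m j :
  inN e v1 l w -> inN e u1 m w -> l < m -> m + j = k -> 1 < j ->
  sphere e w j = u |: ~: ball e u k.
Proof.
move=> hl hm lm jm j_gt1; apply/eqP; rewrite eqEcard; apply/andP; split.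
  apply/subsetP => z /sphere_inN hz; apply/negPn/negP.
  case/mem_ball_out_neighbours => /ballP [n nk hn].
    have hmz : inN e u1 k z by rewrite -jm; apply: inN_cat hm hz.
    by have := geodetic_inN_uniq geo hmz hn (leqnn k) (leq_trans nk (leq_pred k)); lia.
  move/eqP: (out_neighbours_neq hv); apply.
  by apply: (geodetic_inN_head geo ev1 ev2 (inN_cat hl hz) hn); lia.
rewrite cardsU1 card_outside_ball (card_sphere geo out_deg2); last by lia.
have : 2 ^ 2 <= 2 ^ j by rewrite leq_exp2l.
exact: leq_trans (leq_add (leq_b1 _) (leqnn 3)).
Qed.

Lemma closer_to_v1_far_from_u1 w l m :
  inN e v1 l w -> inN e u1 m w -> l < m -> k.-1 <= m.
Proof.
move=> hl hm lm; rewrite leqNgt; apply/negP => mk.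
have Z_eq : sphere e w (k - m) = u |: ~: ball e u k.
  by apply: sphere_eq_outside_ball hl hm lm _ _; lia.
set Z := sphere e w (k - m) in Z_eq.
have near_u1 y : y \notin Z -> y \notin ball e u2 k.-1 -> y \in ball e u1 k.-1.
  by rewrite Z_eq => /mem_ball_out_neighbours [] // ->.
have v1_near : v1 \in ball e u1 k.-1.
  apply: near_u1; apply/negP.
    by move/sphere_inN/(inN_cat hl)/(geodetic_inN_loop geo); lia.
  case/ballP => n nk hn; move/eqP: (out_neighbours_neq hv); apply.
  by apply: (geodetic_inN_head geo ev1 ev2 (inN0 e v1) hn); lia.
have v_near : v \in ball e u1 k.-1.
  apply: near_u1; apply/negP.
    by move/sphere_inN/(inN_cat hl)/(inN_cons ev1)/(geodetic_inN_loop geo); lia.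
  by case/ballP => n nk /(inN_cons ev2)/(geodetic_inN_loop geo); lia.
case/ballP: v_near => n nk hn; case/ballP: v1_near => n1 n1k hn1.
have [n_short | n_long] := ltnP n k.-1.
  move/eqP: (out_neighbours_neq hu); apply.
  have hu2 := inN_cat hn (inN_cons ev2 (inN0 e u2)).
  by apply: (geodetic_inN_head geo eu1 eu2 hu2 (inN0 e u2)); lia.
by have := geodetic_inN_uniq geo (inN_cat hn (inN_cons ev1 (inN0 e v1))) hn1; lia.
Qed.

Lemma dist_twin_far w l m : dist_is e v1 w l -> inT e k u1 w -> dist_is e u1 w m ->
  m <= l \/ inN e u1 k.-1 w.
Proof.
move=> [hl _] [m' [m'k dm']] dm; rewrite -(dist_is_uniq dm' dm).
have [|lm] := leqP m' l; [by left | right].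
have km := closer_to_v1_far_from_u1 hl dm'.1 lm.
by rewrite (_ : k.-1 = m'); [case: dm' | apply/anti_leq/andP].
Qed.

End Twins.
End DiregularExcess3.

Theorem lemma4 (V : finType) (e : rel V) (k : nat) (u v u1 u2 v1 : V) :
  3 <= k -> diregular_2k3 e k ->
  u != v ->
  (forall x, e u x <-> x = u1 \/ x = u2) ->
  (forall x, e v x <-> x = v1 \/ x = u2) ->
  u1 != v1 ->
  (forall (w : V) (l m : nat),
      inT e k v1 w -> dist_is e v1 w l ->
      inT e k u1 w -> dist_is e u1 w m ->
      m <= l \/ inN e u1 k.-1 w) /\
  (forall (w : V) (l m : nat),
      inT e k u1 w -> dist_is e u1 w l ->
      inT e k v1 w -> dist_is e v1 w m ->
      m <= l \/ inN e v1 k.-1 w).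
Proof.
move=> _ [geo deg order] _ hu hv _.
have out_deg2 x : #|[set y | e x y]| = 2 := (deg x).1.
by split=> w l m _; apply: dist_twin_far.
Qed.
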